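(* Let $A$ be a strongly AUF algebra and let $e\in A$ be a generating idempotent. Then the $A$-$(eAe)$ bimodule $Ae$ has a left coordinate system. In particular, $Ae$ is a projective right $eAe$-module.
   Context: All algebras are associative $\mathbb C$-algebras, not necessarily unital. An idempotent is an element $e$ with $e^2=e$. An algebra $A$ is AUF if there is a family $(e_i)_{i\in\mathfrak I}$ of mutually orthogonal idempotents with $\dim e_iAe_j<\infty$ and $A=\sum_{i,j}e_iAe_j$. A left $A$-module $M$ is quasicoherent if $\xi\in A\xi$ for all $\xi\in M$. Irreducible means nonzero with no nonzero proper submodules. An idempotent $e$ is generating if every irreducible quasicoherent left $A$-module is a quotient of $Ae$; $A$ is strongly AUF if it is AUF and has a generating idempotent. The algebra $eAe$ is unital with unit $e$. A left coordinate system of an $A$-$B$ bimodule $M$ ($B$ unital) is a family of right $B$-module maps $\alpha_i:B\to M$, $\check\alpha^i:M\to B$, $i\in I$, such that (a) for each $\xi\in M$, $\check\alpha^i(\xi)=0$ for all but finitely many $i$ and $\sum_i\alpha_i\check\alpha^i(\xi)=\xi$; (b) for each $x\in A$ (acting on $M$), $x\circ\alpha_i=0$ and $\check\alpha^i\circ x=0$ for all but finitely many $i$. *)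

(* Algebras are modelled as a C-vector space V (lmodType over
   C := R[i] for R : realType) with a bilinear associative multiplication
   [mul : V -> V -> V]; no unit is assumed. *)
From HB Require Import structures.
From mathcomp Require Import all_boot all_order all_algebra.
From mathcomp Require Import reals complex.
Set Implicit Arguments. Unset Strict Implicit. Unset Printing Implicit Defensive.
Import Order.TTheory GRing.Theory Num.Theory.
Local Open Scope ring_scope.

Section NUAlg.
Variable K : fieldType.
Variable V : lmodType K.
Variable mul : V -> V -> V.

Definition is_algebra : Prop :=
  (forall x y z, mul x (mul y z) = mul (mul x y) z) /\
  (forall x y z, mul (x + y) z = mul x z + mul y z) /\
  (forall x y z, mul x (y + z) = mul x y + mul x z) /\
  (forall (c : K) x y, mul (c *: x) y = c *: mul x y) /\
  (forall (c : K) x y, mul x (c *: y) = c *: mul x y).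

Definition idempotent (e : V) : Prop := mul e e = e.

Definition fin_dim (S : V -> Prop) : Prop :=
  exists s : seq V, forall v, S v ->
    exists c : 'I_(size s) -> K, v = \sum_(k < size s) c k *: s`_k.

Definition corner (e f : V) : V -> Prop := fun v => exists a, v = mul (mul e a) f.

Definition is_AUF : Prop :=
  exists (J : Type) (E : J -> V),
    (forall i, idempotent (E i)) /\
    (forall i j, i <> j -> mul (E i) (E j) = 0) /\
    (forall i j, fin_dim (corner (E i) (E j))) /\
    (forall a : V, exists (n : nat) (t : 'I_n -> (J * J * V)),
        (forall k, corner (E (t k).1.1) (E (t k).1.2) (t k).2) /\
        a = \sum_(k < n) (t k).2).

Definition left_module (M : lmodType K) (act : V -> M -> M) : Prop :=
  (forall x y m, act (mul x y) m = act x (act y m)) /\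
  (forall x y m, act (x + y) m = act x m + act y m) /\
  (forall x m n, act x (m + n) = act x m + act x n) /\
  (forall (c : K) x m, act (c *: x) m = c *: act x m) /\
  (forall (c : K) x m, act x (c *: m) = c *: act x m).

Definition quasicoherent (M : lmodType K) (act : V -> M -> M) : Prop :=
  forall m : M, exists x, act x m = m.

Definition submodule (M : lmodType K) (act : V -> M -> M) (N : M -> Prop) : Prop :=
  N 0 /\ (forall m n, N m -> N n -> N (m + n)) /\
  (forall (c : K) m, N m -> N (c *: m)) /\ (forall x m, N m -> N (act x m)).

Definition irreducible (M : lmodType K) (act : V -> M -> M) : Prop :=
  (exists m : M, m <> 0) /\
  forall N : M -> Prop, submodule act N ->
    (forall m, N m -> m = 0) \/ (forall m, N m).

Definition inAe (e a : V) : Prop := exists b, a = mul b e.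
Definition inB (e b : V) : Prop := exists a, b = mul (mul e a) e.

Definition quotient_of_Ae (e : V) (M : lmodType K) (act : V -> M -> M) : Prop :=
  exists f : V -> M,
    (forall a b, inAe e a -> inAe e b -> f (a + b) = f a + f b) /\
    (forall (c : K) a, inAe e a -> f (c *: a) = c *: f a) /\
    (forall x a, inAe e a -> f (mul x a) = act x (f a)) /\
    (forall m, exists a, inAe e a /\ f a = m).

Definition generating (e : V) : Prop :=
  idempotent e /\
  forall (M : lmodType K) (act : V -> M -> M),
    left_module act -> quasicoherent act -> irreducible act ->
    quotient_of_Ae e act.

Definition strongly_AUF : Prop := is_AUF /\ exists e, generating e.

Definition rmap_B_Ae (e : V) (f : V -> V) : Prop :=
  (forall b, inB e b -> inAe e (f b)) /\
  (forall b b', inB e b -> inB e b' -> f (b + b') = f b + f b') /\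
  (forall (c : K) b, inB e b -> f (c *: b) = c *: f b) /\
  (forall b b', inB e b -> inB e b' -> f (mul b b') = mul (f b) b').

Definition rmap_Ae_B (e : V) (g : V -> V) : Prop :=
  (forall xi, inAe e xi -> inB e (g xi)) /\
  (forall xi xi', inAe e xi -> inAe e xi' -> g (xi + xi') = g xi + g xi') /\
  (forall (c : K) xi, inAe e xi -> g (c *: xi) = c *: g xi) /\
  (forall xi b, inAe e xi -> inB e b -> g (mul xi b) = mul (g xi) b).

Definition left_coordinate_system (e : V) : Prop :=
  exists (I : eqType) (al ch : I -> V -> V),
    (forall i, rmap_B_Ae e (al i)) /\
    (forall i, rmap_Ae_B e (ch i)) /\
    (forall xi, inAe e xi -> exists s : seq I,
        uniq s /\ (forall i, i \notin s -> ch i xi = 0) /\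
        xi = \sum_(i <- s) al i (ch i xi)) /\
    (forall x : V, exists s : seq I, forall i, i \notin s ->
        (forall b, inB e b -> mul x (al i b) = 0) /\
        (forall xi, inAe e xi -> ch i (mul x xi) = 0)).

(* right (unital) eAe-modules, given by an action N -> V -> N constrained on eAe *)
Definition right_B_module (e : V) (N : lmodType K) (ract : N -> V -> N) : Prop :=
  (forall n, ract n e = n) /\
  (forall n b b', inB e b -> inB e b' -> ract n (mul b b') = ract (ract n b) b') /\
  (forall n b b', inB e b -> inB e b' -> ract n (b + b') = ract n b + ract n b') /\
  (forall n n' b, inB e b -> ract (n + n') b = ract n b + ract n' b) /\
  (forall (c : K) n b, inB e b -> ract (c *: n) b = c *: ract n b) /\
  (forall (c : K) n b, inB e b -> ract n (c *: b) = c *: ract n b).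

Definition right_B_hom (e : V) (N P : lmodType K)
    (ractN : N -> V -> N) (ractP : P -> V -> P) (g : N -> P) : Prop :=
  (forall n n', g (n + n') = g n + g n') /\
  (forall (c : K) n, g (c *: n) = c *: g n) /\
  (forall n b, inB e b -> g (ractN n b) = ractP (g n) b).

Definition right_B_hom_Ae (e : V) (P : lmodType K) (ractP : P -> V -> P)
    (h : V -> P) : Prop :=
  (forall xi xi', inAe e xi -> inAe e xi' -> h (xi + xi') = h xi + h xi') /\
  (forall (c : K) xi, inAe e xi -> h (c *: xi) = c *: h xi) /\
  (forall xi b, inAe e xi -> inB e b -> h (mul xi b) = ractP (h xi) b).

Definition projective_Ae (e : V) : Prop :=
  forall (N P : lmodType K) (ractN : N -> V -> N) (ractP : P -> V -> P),
    right_B_module e ractN -> right_B_module e ractP ->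
    forall g : N -> P, right_B_hom e ractN ractP g -> (forall p, exists n, g n = p) ->
    forall h : V -> P, right_B_hom_Ae e ractP h ->
    exists k : V -> N, right_B_hom_Ae e ractN k /\
      (forall xi, inAe e xi -> g (k xi) = h xi).

End NUAlg.

From Pilot Require Import Defs.
From HB Require Import structures.
From mathcomp Require Import all_boot all_order all_algebra.
From mathcomp Require Import reals complex.
From mathcomp Require Import boolp classical_sets.
Set Implicit Arguments. Unset Strict Implicit. Unset Printing Implicit Defensive.
Import GRing.Theory.
Local Open Scope ring_scope.
Local Open Scope quotient_scope.
Local Open Scope classical_set_scope.

(* Each idempotent [E j] of the AUF family lies in the ideal [AeA]: otherwise a
   left ideal [N] maximal among those containing [AeA + A(1 - E j)] but not [E j]
   makes [A/N] an irreducible quasicoherent module killed by [e], which cannot be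
   a quotient of [Ae].  Writing [E j = \sum_m u_m e w_m], the maps
   [b |-> E j u_m b] and [xi |-> e w_m E j xi] form a left coordinate system of
   [Ae], because [xi = \sum_j E j xi] and [\sum_m E j u_m e w_m E j = E j].
   Coordinates then lift maps out of [Ae] through any surjection of right
   [eAe]-modules, which is projectivity. *)

Lemma additive_sum_in (U W : zmodType) (P : U -> Prop) (f : U -> W) :
  P 0 -> (forall x y, P x -> P y -> P (x + y)) ->
  (forall x y, P x -> P y -> f (x + y) = f x + f y) ->
  forall (I : Type) (r : seq I) (F : I -> U), (forall i, P (F i)) ->
  f (\sum_(i <- r) F i) = \sum_(i <- r) f (F i).
Proof.
move=> P0 PD fD I r F PF.
have f0 : f 0 = 0 by apply: (addrI (f 0)); rewrite -fD // !addr0.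
elim: r => [|i r IH]; first by rewrite !big_nil.
by rewrite !big_cons fD ?IH //; apply: big_ind.
Qed.

Lemma eq_big_support (I : eqType) (M : nmodType) (F : I -> M) (s t : seq I) :
  uniq s -> uniq t -> (forall i, i \notin s -> F i = 0) ->
  (forall i, i \notin t -> F i = 0) -> \sum_(i <- s) F i = \sum_(i <- t) F i.
Proof.
move=> s_uniq t_uniq Fs Ft.
rewrite (bigID (fun i => i \in t)) /= [X in _ + X]big1 ?addr0; last by move=> i /Ft.
rewrite [RHS](bigID (fun i => i \in s)) /= [X in _ + X]big1 ?addr0; last by move=> i /Fs.
rewrite -(big_filter s (mem t)) -(big_filter t (mem s)).
apply: perm_big; apply: uniq_perm; rewrite ?filter_uniq //.
by move=> i; rewrite !mem_filter andbC.
Qed.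

Section QuotientModule.
Variables (K : fieldType) (V : lmodType K) (mul : V -> V -> V).
Variables (M : lmodType K) (act : V -> M -> M).
Hypothesis Hact : left_module mul act.
Variable N : set M.
Hypothesis Nsub : submodule act N.

Definition submodule_pred : {pred M} := fun m => `[< N m >].

Fact submodule_zmod_closed : zmod_closed submodule_pred.
Proof.
have [N0 [ND [NZ _]]] := Nsub.
split=> [|x y /asboolP Nx /asboolP Ny]; apply/asboolP => //.
by apply: ND => //; rewrite -scaleN1r; apply: NZ.
Qed.

Definition submodule_zmodClosed : zmodClosed M :=
  HB.pack submodule_pred (GRing.isZmodClosed.Build M submodule_pred submodule_zmod_closed).

Definition qmod := Quotient.quot submodule_zmodClosed.
HB.instance Definition _ := Choice.on qmod.
HB.instance Definition _ := EqQuotient.on qmod.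
HB.instance Definition _ := GRing.Zmodule.on qmod.
HB.instance Definition _ := ZmodQuotient.on qmod.

Lemma eqquot_submoduleP m m' : reflect (N (m - m')) (m == m' %[mod qmod]).
Proof. by rewrite -Quotient.idealrBE; apply: asboolP. Qed.

Definition qscale (c : K) := lift_op1 qmod ( *:%R c).

Lemma pi_qscale c : {morph \pi_qmod : m / c *: m >-> qscale c m}.
Proof.
move=> m; unlock qscale; apply/eqP/eqquot_submoduleP; rewrite -scalerBr.
by apply: Nsub.2.2.1; apply/eqquot_submoduleP; rewrite reprK.
Qed.
Canonical pi_qscale_morph c := PiMorph1 (pi_qscale c).

Lemma qscaleA a b q : qscale a (qscale b q) = qscale (a * b) q.
Proof. by rewrite -[q]reprK !piE scalerA. Qed.

Lemma qscale1 : left_id 1 qscale.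
Proof. by move=> q; rewrite -[q]reprK !piE scale1r. Qed.

Lemma qscaleDr : right_distributive qscale +%R.
Proof. by move=> a q q'; rewrite -[q]reprK -[q']reprK !piE scalerDr. Qed.

Lemma qscaleDl q : {morph qscale^~ q : a b / a + b}.
Proof. by move=> a b; rewrite -[q]reprK !piE scalerDl. Qed.

HB.instance Definition _ :=
  GRing.Zmodule_isLmodule.Build K qmod qscaleA qscale1 qscaleDr qscaleDl.

Lemma pi_qmodZ c m : \pi_qmod (c *: m) = c *: \pi_qmod m.
Proof. exact: pi_qscale. Qed.

Lemma pi_qmod_eq0 m : \pi_qmod m = 0 <-> N m.
Proof.
rewrite -pi_zeror -{2}[m]subr0.
by split=> [/eqP/eqquot_submoduleP | /eqquot_submoduleP/eqP].
Qed.

Definition qact (x : V) := lift_op1 qmod (act x).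

Lemma pi_qact x : {morph \pi_qmod : m / act x m >-> qact x m}.
Proof.
have [_ [_ [actDr [_ actZr]]]] := Hact.
move=> m; unlock qact; apply/eqP/eqquot_submoduleP.
have -> : act x m - act x (repr (\pi_qmod m)) = act x (m - repr (\pi_qmod m)).
  by rewrite actDr -[- repr _]scaleN1r actZr scaleN1r.
by apply: Nsub.2.2.2; apply/eqquot_submoduleP; rewrite reprK.
Qed.
Canonical pi_qact_morph x := PiMorph1 (pi_qact x).

Lemma qact_left_module : left_module mul qact.
Proof.
have [actM [actDl [actDr [actZl actZr]]]] := Hact.
split=> [x y q|]; first by rewrite -[q]reprK !piE actM.
split=> [x y q|]; first by rewrite -[q]reprK !piE actDl.
split=> [x q q'|]; first by rewrite -[q]reprK -[q']reprK !piE actDr.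
by split=> [c x q|c x q]; rewrite -[q]reprK !piE ?actZl ?actZr pi_qmodZ.
Qed.

Lemma qact_quasicoherent : quasicoherent act -> quasicoherent qact.
Proof.
by move=> Mqc q; have [x xq] := Mqc (repr q); exists x; rewrite -[q]reprK !piE xq.
Qed.

End QuotientModule.

Arguments qact {K V M act N} Nsub x.

Section MaximalLeftIdeal.
Variables (K : fieldType) (V : lmodType K) (mul : V -> V -> V).

Lemma maximal_left_ideal_avoiding (L : set V) (f : V) :
  submodule mul L -> ~ L f ->
  exists N, [/\ submodule mul N, L `<=` N, ~ N f &
    forall N', submodule mul N' -> N `<` N' -> N' f].
Proof.
move=> Lsub Lf.
(* [Zorn_bigcup] also requires the union of the empty chain to qualify. *)
pose P (X : set V) := submodule mul (L `|` X) /\ ~ (L `|` X) f.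
have [X [[Xsub Xf] Xmax]] : exists X, P X /\ forall Y, X `<` Y -> ~ P Y.
  apply: Zorn_bigcup => F FP Fchain; set U := \bigcup_(X in F) X.
  have LUX X : F X -> L `|` X `<=` L `|` U.
    by move=> FX; apply: setUS; exact: bigcup_sup.
  have LU2 x y : (L `|` U) x -> (L `|` U) y ->
      exists X, [/\ submodule mul (L `|` X), (L `|` X) x, (L `|` X) y & L `|` X `<=` L `|` U].
    move=> [Lx|[X FX Xx]] [Ly|[Y FY Yy]].
    - by exists set0; rewrite setU0; split=> //.
    - by exists Y; split=> //; [exact: (FP Y FY).1 | left | right | exact: LUX].
    - by exists X; split=> //; [exact: (FP X FX).1 | right | left | exact: LUX].
    - have [XY|YX] := Fchain X Y FX FY.
        by exists Y; split=> //; [exact: (FP Y FY).1 | right; apply: XY | right | exact: LUX].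
      by exists X; split=> //; [exact: (FP X FX).1 | right | right; apply: YX | exact: LUX].
  split; last by case=> [//|[X FX Xf]]; apply: (FP X FX).2; right.
  split; first by left; exact: Lsub.1.
  split=> [x y LUx LUy|].
    by have [X [[_ [XD _]] Xx Xy XLU]] := LU2 _ _ LUx LUy; apply/XLU/XD.
  split=> [c x LUx|a x LUx]; have [X [[_ [_ [XZ XM]]] Xx _ XLU]] := LU2 _ _ LUx LUx.
  - exact/XLU/XZ.
  - exact/XLU/XM.
exists (L `|` X); split=> //.
move=> N' N'sub [XN' N'X]; apply: contrapT => N'f.
have LN' : L `<=` N' by apply: subset_trans XN'; apply: subsetUl.
apply: (Xmax N'); last by rewrite /P setUidr.
split; first by apply: subset_trans XN'; apply: subsetUr.
by move=> N'X'; apply: N'X; apply: subset_trans N'X' _; apply: subsetUr.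
Qed.

End MaximalLeftIdeal.

Section Algebra.
Variables (K : fieldType) (V : lmodType K) (mul : V -> V -> V).
Hypothesis Halg : is_algebra mul.
Local Notation "x ** y" := (mul x y) (at level 40, left associativity).

Lemma mulA x y z : x ** (y ** z) = x ** y ** z. Proof. by case: Halg. Qed.
Lemma mulDl x y z : (x + y) ** z = x ** z + y ** z. Proof. by case: Halg => _ []. Qed.
Lemma mulDr x y z : x ** (y + z) = x ** y + x ** z. Proof. by case: Halg => _ [_ []]. Qed.
Lemma mulZl c x y : (c *: x) ** y = c *: (x ** y). Proof. by case: Halg => _ [_ [_ []]]. Qed.
Lemma mulZr c x y : x ** (c *: y) = c *: (x ** y). Proof. by case: Halg => _ [_ [_ []]]. Qed.
Lemma mul0l y : 0 ** y = 0. Proof. by rewrite -[X in X ** _](scale0r (0 : V)) mulZl scale0r. Qed.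
Lemma mul0r y : y ** 0 = 0. Proof. by rewrite -[X in _ ** X](scale0r (0 : V)) mulZr scale0r. Qed.
Lemma mulBl x y z : (x - y) ** z = x ** z - y ** z.
Proof. by rewrite mulDl -scaleN1r mulZl scaleN1r. Qed.
Lemma mulBr x y z : x ** (y - z) = x ** y - x ** z.
Proof. by rewrite mulDr -scaleN1r mulZr scaleN1r. Qed.

Lemma mul_suml (I : Type) (r : seq I) (F : I -> V) y :
  (\sum_(i <- r) F i) ** y = \sum_(i <- r) F i ** y.
Proof. exact: (big_morph (mul^~ y) (fun a b => mulDl a b y) (mul0l y)). Qed.

Lemma mul_sumr (I : Type) (r : seq I) (F : I -> V) y :
  y ** (\sum_(i <- r) F i) = \sum_(i <- r) y ** F i.
Proof. exact: (big_morph (mul y) (mulDr y) (mul0r y)). Qed.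


Lemma regular_left_module : left_module mul mul.
Proof.
split; [by move=> x y z; rewrite mulA | split; [exact: mulDl|]].
by split; [exact: mulDr | split; [exact: mulZl | exact: mulZr]].
Qed.

Definition left_ideal_adjoin (N : set V) (x : V) : set V :=
  fun z => exists n a (c : K), N n /\ z = n + a ** x + c *: x.

Lemma left_ideal_adjoin_submodule N x :
  submodule mul N -> submodule mul (left_ideal_adjoin N x).
Proof.
move=> [N0 [ND [NZ NM]]].
split; first by exists 0, 0, 0; rewrite mul0l scale0r !addr0.
split=> [_ _ [n [a [c [Nn ->]]]] [n' [a' [c' [Nn' ->]]]]|].
  exists (n + n'), (a + a'), (c + c'); split; first exact: ND.
  by rewrite mulDl scalerDl [LHS]addrACA [n + n' + _]addrACA.
split=> [d _ [n [a [c [Nn ->]]]]|b _ [n [a [c [Nn ->]]]]].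
  exists (d *: n), (d *: a), (d * c); split; first exact: NZ.
  by rewrite !scalerDr mulZl scalerA.
exists (b ** n), (b ** a + c *: b), 0; split; first exact: NM.
by rewrite scale0r addr0 !mulDr mulA mulDl mulZl mulZr addrA.
Qed.

Lemma left_ideal_adjoin_proper N x :
  N 0 -> ~ N x -> N `<` left_ideal_adjoin N x.
Proof.
move=> N0 Nx; split=> [n Nn|adjN]; first by exists n, 0, 0; rewrite mul0l scale0r !addr0.
by apply: Nx; apply: adjN; exists 0, 0, 1; rewrite mul0l scale1r !add0r.
Qed.

Lemma maximal_quotient_irreducible (N : set V) (Nsub : submodule mul N) (f : V) :
  Defs.idempotent mul f -> ~ N f -> (forall x, N (x - x ** f)) ->
  (forall N', submodule mul N' -> N `<` N' -> N' f) ->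
  irreducible (qact Nsub).
Proof.
move=> ff Nf Nf1 Nmax; have Hreg := regular_left_module.
split; first by exists (\pi_(qmod Nsub) f) => /pi_qmod_eq0.
move=> Ns [_ [NsD [NsZ NsM]]].
have [[q [Nsq q0]]|] := EM (exists q, Ns q /\ q <> 0); last first.
  by move=> Ns_nz; left=> q Nsq; apply: contrapT => q0; apply: Ns_nz; exists q.
right; move: q Nsq q0; elim/quotW => x Nsx x0.
have Nx : ~ N x by move=> /(pi_qmod_eq0 Nsub).
have [n [a [c [Nn ef]]]] := Nmax _ (left_ideal_adjoin_submodule x Nsub)
  (left_ideal_adjoin_proper Nsub.1 Nx).
elim/quotW=> y.
(* [\pi y = \pi (y f)] and [f] lies in [N + A x + K x]. *)
have -> : \pi_(qmod Nsub) y = \pi_(qmod Nsub) (y ** f) by apply/eqP/eqquot_submoduleP.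
rewrite ef !mulDr mulA mulZr !pi_addr pi_qmodZ.
rewrite (proj2 (pi_qmod_eq0 Nsub _) (Nsub.2.2.2 y n Nn)) add0r.
by rewrite !(pi_qact Hreg); apply: NsD; [apply: NsM | apply/NsZ/NsM].
Qed.

Lemma quotient_of_Ae_eq0 e (M : lmodType K) (act : V -> M -> M) :
  Defs.idempotent mul e -> left_module mul act -> quotient_of_Ae mul e act ->
  (forall m, act e m = 0) -> forall m : M, m = 0.
Proof.
move=> ee [_ [_ [actDr _]]] [F [_ [_ [FM Fsurj]]]] acte m.
have act0 x : act x 0 = 0 by apply: (addrI (act x 0)); rewrite -actDr !addr0.
have Fe : F e = 0 by rewrite -{1}ee FM ?acte //; exists e.
by have [_ [[b ->] <-]] := Fsurj m; rewrite FM ?Fe ?act0 //; exists e.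
Qed.

Definition in_AeA (e z : V) : Prop :=
  exists s : seq (V * V), z = \sum_(p <- s) p.1 ** e ** p.2.

Lemma AeA_submodule e : submodule mul (in_AeA e).
Proof.
split; first by exists [::]; rewrite big_nil.
split=> [_ _ [s ->] [s' ->]|]; first by exists (s ++ s'); rewrite big_cat.
split=> [c _ [s ->]|a _ [s ->]].
  exists [seq (c *: p.1, p.2) | p <- s]; rewrite big_map scaler_sumr.
  by apply: eq_bigr => p _; rewrite !mulZl.
exists [seq (a ** p.1, p.2) | p <- s]; rewrite big_map mul_sumr.
by apply: eq_bigr => p _; rewrite !mulA.
Qed.

Lemma AeA_mulr e z a : in_AeA e z -> in_AeA e (z ** a).
Proof.
move=> [s ->]; exists [seq (p.1, p.2 ** a) | p <- s]; rewrite big_map mul_suml.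
by apply: eq_bigr => p _; rewrite !mulA.
Qed.

Lemma AeA_idem_mul e z : Defs.idempotent mul e -> in_AeA e (e ** z).
Proof. by move=> ee; exists [:: (e, z)]; rewrite big_seq1 /= ee. Qed.

(* [A(1 - f)] makes sense without a unit as the left ideal of all [x - x f]. *)
Definition AeA_plus_A1f (e f : V) : set V :=
  fun z => exists t x, in_AeA e t /\ z = t + (x - x ** f).

Lemma AeA_plus_A1f_submodule e f : submodule mul (AeA_plus_A1f e f).
Proof.
have [_ [AD [AZ AM]]] := AeA_submodule e.
split; first by exists 0, 0; split; [exact: (AeA_submodule e).1 | rewrite mul0l subrr addr0].
split=> [_ _ [t [x [Tt ->]]] [t' [x' [Tt' ->]]]|].
  exists (t + t'), (x + x'); split; first exact: AD.
  by rewrite mulDl opprD [LHS]addrACA [x + x' + _]addrACA.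
split=> [c _ [t [x [Tt ->]]]|a _ [t [x [Tt ->]]]].
  exists (c *: t), (c *: x); split; first exact: AZ.
  by rewrite mulZl -scalerBr scalerDr.
exists (a ** t), (a ** x); split; first exact: AM.
by rewrite mulDr mulBr mulA.
Qed.

Lemma AeA_plus_A1f_idem e f :
  Defs.idempotent mul f -> AeA_plus_A1f e f f -> in_AeA e f.
Proof.
move=> ff [t [x [Tt ef]]]; rewrite -ff {1}ef mulDl mulBl -mulA ff subrr addr0.
exact: AeA_mulr.
Qed.

Lemma generating_idempotent_in_AeA e f :
  quasicoherent mul -> generating mul e -> Defs.idempotent mul f -> in_AeA e f.
Proof.
move=> Aqc [ee egen] ff; apply: contrapT => fAeA.
have [N [Nsub LN Nf Nmax]] := maximal_left_ideal_avoiding (AeA_plus_A1f_submodule e f)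
  (fun Lf => fAeA (AeA_plus_A1f_idem ff Lf)).
have Nf1 x : N (x - x ** f).
  by apply: LN; exists 0, x; rewrite add0r; split=> //; exact: (AeA_submodule e).1.
have Nirr := maximal_quotient_irreducible Nsub ff Nf Nf1 Nmax.
have Nlm := qact_left_module regular_left_module Nsub.
have Nqc : quasicoherent (qact Nsub) := qact_quasicoherent regular_left_module Aqc.
suff /(pi_qmod_eq0 Nsub) : \pi_(qmod Nsub) f = 0 by [].
apply: (quotient_of_Ae_eq0 ee Nlm (egen _ _ Nlm Nqc Nirr)) => q.
elim/quotW: q => y; rewrite -(pi_qact regular_left_module); apply/(pi_qmod_eq0 Nsub).
apply: LN; exists (e ** y), 0; split; first exact: AeA_idem_mul.
by rewrite mul0l subrr addr0.
Qed.

Section AUF.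
Variables (J : Type) (E : J -> V).
Hypothesis Eidem : forall j, Defs.idempotent mul (E j).
Hypothesis Eorth : forall i j, i <> j -> E i ** E j = 0.
Hypothesis Edec : forall a : V, exists (n : nat) (t : 'I_n -> (J * J * V)),
  (forall k, corner mul (E (t k).1.1) (E (t k).1.2) (t k).2) /\ a = \sum_(k < n) (t k).2.

Definition isE (v : V) : Prop := exists j, v = E j.

Lemma isE_idem v : isE v -> v ** v = v.
Proof. by move=> [j ->]; apply: Eidem. Qed.

Lemma isE_orth v w : isE v -> isE w -> v != w -> v ** w = 0.
Proof. by move=> [i ->] [j ->] ij; apply: Eorth => eij; rewrite eij eqxx in ij. Qed.

Lemma isE_mul_corner v i j p : isE v -> corner mul (E i) (E j) p ->
  v ** p = if v == E i then p else 0.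
Proof.
move=> Ev [a ->]; case: eqP => [->|/eqP vEi]; first by rewrite !mulA Eidem.
by rewrite !mulA (isE_orth Ev _ vEi) ?mul0l //; exists i.
Qed.

Lemma corner_mul_isE v i j p : isE v -> corner mul (E i) (E j) p ->
  p ** v = if v == E j then p else 0.
Proof.
move=> Ev [a ->]; case: eqP => [->|/eqP vEj]; first by rewrite -!mulA Eidem.
by rewrite -mulA (isE_orth _ Ev) ?mul0r // 1?eq_sym //; exists j.
Qed.

Lemma left_decomposition a : exists S : seq V,
  [/\ uniq S, forall v, v \in S -> isE v, a = \sum_(v <- S) v ** a
    & forall v, isE v -> v \notin S -> v ** a = 0].
Proof.
have [n [t [tE ->]]] := Edec a.
set S := undup [seq E (t k).1.1 | k <- enum 'I_n].
have memS k : E (t k).1.1 \in S by rewrite mem_undup; apply: map_f; rewrite mem_enum.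
have SE v : v \in S -> isE v by rewrite mem_undup => /mapP [k _ ->]; exists (t k).1.1.
exists S; split; [exact: undup_uniq | exact: SE | | move=> v Ev vS]; last first.
  rewrite mul_sumr big1 // => k _; rewrite (isE_mul_corner _ (tE k)) //.
  by case: eqP => // vE; rewrite vE memS in vS.
rewrite (eq_bigr (fun v => \sum_(k < n) v ** (t k).2)) => [|v _]; last exact: mul_sumr.
rewrite exchange_big; apply: eq_bigr => k _ /=.
rewrite (bigD1_seq (E (t k).1.1)) ?undup_uniq //= (isE_mul_corner _ (tE k)); last first.
  by exists (t k).1.1.
rewrite eqxx big1_seq ?addr0 // => v /andP [vE vS].
by rewrite (isE_mul_corner _ (tE k)) ?(negbTE vE) //; exact: SE.
Qed.

Lemma right_support a : exists S : seq V, forall v, isE v -> v \notin S -> a ** v = 0.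
Proof.
have [n [t [tE ->]]] := Edec a.
exists [seq E (t k).1.2 | k <- enum 'I_n] => v Ev vS.
rewrite mul_suml big1 // => k _; rewrite (corner_mul_isE _ (tE k)) //.
by case: eqP => // vE; rewrite vE map_f ?mem_enum in vS.
Qed.

Lemma AUF_quasicoherent : quasicoherent mul.
Proof.
move=> a; have [S [_ _ aS _]] := left_decomposition a.
by exists (\sum_(v <- S) v); rewrite mul_suml -aS.
Qed.

Lemma AeA_decompositions e : generating mul e ->
  exists D : V -> seq (V * V),
    (forall v, isE v -> v = \sum_(p <- D v) p.1 ** e ** p.2) /\
    (forall v, ~ isE v -> D v = [::]).
Proof.
move=> egen.
have /choice [D DP] v : exists s : seq (V * V),
    (isE v -> v = \sum_(p <- s) p.1 ** e ** p.2) /\ (~ isE v -> s = [::]).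
  have [[j ->]|nEv] := EM (isE v); last by exists [::].
  have [s Ejs] := generating_idempotent_in_AeA AUF_quasicoherent egen (Eidem j).
  by exists s; split=> // nEj; case: nEj; exists j.
by exists D; split=> v; have [] := DP v.
Qed.

Section Coordinates.
Variables (e : V) (D : V -> seq (V * V)).
Hypothesis D_AeA : forall v, isE v -> v = \sum_(p <- D v) p.1 ** e ** p.2.
Hypothesis D_nil : forall v, ~ isE v -> D v = [::].

(* The coordinate [(v, m)] uses the [m]-th term [(u_m, w_m)] of [D v]; past
   [size (D v)], [nth] returns [(0, 0)] and both maps vanish. *)
Local Notation coord i := (nth (0, 0) (D i.1) i.2).

Definition coord_al (i : V * nat) (b : V) : V := i.1 ** ((coord i).1 ** b).
Definition coord_ch (i : V * nat) (xi : V) : V := e ** (coord i).2 ** (i.1 ** xi).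

Definition coord_index (S : seq V) : seq (V * nat) :=
  [seq (v, m) | v <- S, m <- index_iota 0 (size (D v))].

Lemma coord_index_uniq S : uniq S -> uniq (coord_index S).
Proof.
move=> Suniq; apply: allpairs_uniq_dep => // [v _|]; first exact: iota_uniq.
by move=> [v m] [v' m'] _ _ [-> ->].
Qed.

Lemma coord_index_notin S i : i \notin coord_index S ->
  coord i = (0, 0) \/ (isE i.1 /\ i.1 \notin S).
Proof.
case: i => v m /= iS; have [Ev|nEv] := EM (isE v); last by left; rewrite D_nil ?nth_nil.
have [vS|] := boolP (v \in S); last by right.
left; apply: nth_default; rewrite leqNgt; apply: contra iS => mD.
by apply/allpairsPdep; exists v, m; rewrite mem_index_iota.
Qed.

Lemma coord_al_rmap i : rmap_B_Ae mul e (coord_al i).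
Proof.
split=> [_ [a ->]|]; first by exists (i.1 ** ((coord i).1 ** (e ** a))); rewrite /coord_al !mulA.
split=> [b b' _ _|]; first by rewrite /coord_al !mulDr.
split=> [c b _|b b' _ _]; first by rewrite /coord_al !mulZr.
by rewrite /coord_al !mulA.
Qed.

Lemma coord_ch_rmap i : rmap_Ae_B mul e (coord_ch i).
Proof.
split=> [_ [a ->]|]; first by exists ((coord i).2 ** (i.1 ** a)); rewrite /coord_ch !mulA.
split=> [xi xi' _ _|]; first by rewrite /coord_ch !mulDr.
split=> [c xi _|xi b _ _]; first by rewrite /coord_ch !mulZr.
by rewrite /coord_ch !mulA.
Qed.

Lemma coord_reconstruction xi : exists s : seq (V * nat), uniq s /\
  (forall i, i \notin s -> coord_ch i xi = 0) /\
  xi = \sum_(i <- s) coord_al i (coord_ch i xi).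
Proof.
have [S [Suniq SE xiS S0]] := left_decomposition xi.
exists (coord_index S); split; first exact: coord_index_uniq.
split=> [i /coord_index_notin [c0|[Ei iS]]|].
- by rewrite /coord_ch c0 mul0r mul0l.
- by rewrite /coord_ch S0 // mul0r.
rewrite big_allpairs_dep {1}xiS; apply: eq_big_seq => v /SE Ev.
transitivity (v ** ((\sum_(p <- D v) p.1 ** e ** p.2) ** (v ** xi))).
  by rewrite -D_AeA // !mulA !isE_idem.
rewrite mul_suml mul_sumr (big_nth (0, 0)); apply: eq_bigr => m _.
by rewrite /coord_al /coord_ch /= !mulA.
Qed.

Lemma coord_locally_finite x : exists s : seq (V * nat), forall i, i \notin s ->
  (forall b, x ** coord_al i b = 0) /\ (forall xi, coord_ch i (x ** xi) = 0).
Proof.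
have [S1 [_ _ _ S10]] := left_decomposition x.
have [S2 S20] := right_support x.
exists (coord_index (S1 ++ S2)) => i /coord_index_notin [c0|[Ei]].
  by rewrite /coord_al /coord_ch c0 /=; split=> *; rewrite ?mul0l ?mul0r ?mul0l.
rewrite mem_cat negb_or => /andP [iS1 iS2].
split=> [b|xi]; first by rewrite /coord_al mulA S20 // mul0l.
by rewrite /coord_ch [i.1 ** _]mulA S10 // mul0l mul0r.
Qed.

Lemma AUF_left_coordinate_system : left_coordinate_system mul e.
Proof.
exists (V * nat)%type, coord_al, coord_ch.
split; first exact: coord_al_rmap.
split; first exact: coord_ch_rmap.
split=> [xi _|x]; first exact: coord_reconstruction.
have [s s_fin] := coord_locally_finite x.
by exists s => i /s_fin [alx chx]; split=> *; [exact: alx | exact: chx].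
Qed.

End Coordinates.

Lemma generating_left_coordinate_system e :
  generating mul e -> left_coordinate_system mul e.
Proof.
move=> egen; have [D [D_AeA D_nil]] := AeA_decompositions egen.
exact: AUF_left_coordinate_system D_AeA D_nil.
Qed.

End AUF.

Section Projectivity.
Variable e : V.
Hypothesis ee : Defs.idempotent mul e.

Lemma inB0 : inB mul e 0.
Proof. by exists 0; rewrite mul0r mul0l. Qed.

Lemma inB_idem : inB mul e e.
Proof. by exists e; rewrite !ee. Qed.

Lemma inB_mul_idem b : inB mul e b -> e ** b = b.
Proof. by move=> [a ->]; rewrite !mulA ee. Qed.

Lemma inAe0 : inAe mul e 0.
Proof. by exists 0; rewrite mul0l. Qed.

Lemma inAeD xi xi' : inAe mul e xi -> inAe mul e xi' -> inAe mul e (xi + xi').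
Proof. by move=> [a ->] [a' ->]; exists (a + a'); rewrite mulDl. Qed.

Lemma inAeZ c xi : inAe mul e xi -> inAe mul e (c *: xi).
Proof. by move=> [a ->]; exists (c *: a); rewrite mulZl. Qed.

Lemma inAe_mulB xi b : inAe mul e xi -> inB mul e b -> inAe mul e (xi ** b).
Proof. by move=> [a ->] [a' ->]; exists (a ** e ** e ** a'); rewrite !mulA. Qed.

Variables (I : eqType) (al ch : I -> V -> V).
Hypothesis al_rmap : forall i, rmap_B_Ae mul e (al i).
Hypothesis ch_rmap : forall i, rmap_Ae_B mul e (ch i).
Variables (NT PT : lmodType K) (ractN : NT -> V -> NT) (ractP : PT -> V -> PT).
Hypothesis HN : right_B_module mul e ractN.
Variables (g : NT -> PT) (h : V -> PT).
Hypothesis Hg : right_B_hom mul e ractN ractP g.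
Hypothesis Hh : right_B_hom_Ae mul e ractP h.
Variable n : I -> NT.
Hypothesis n_lift : forall i, g (n i) = h (al i e).
Variable supp : V -> seq I.
Hypothesis supp_coord : forall xi, inAe mul e xi ->
  [/\ uniq (supp xi), forall i, i \notin supp xi -> ch i xi = 0
    & xi = \sum_(i <- supp xi) al i (ch i xi)].

Definition coord_lift (xi : V) : NT := \sum_(i <- supp xi) ractN (n i) (ch i xi).

Lemma coord_liftE xi s : inAe mul e xi -> uniq s -> (forall i, i \notin s -> ch i xi = 0) ->
  coord_lift xi = \sum_(i <- s) ractN (n i) (ch i xi).
Proof.
have [_ [_ [ractDb _]]] := HN.
have ract0 m : ractN m 0 = 0.
  by apply: (addrI (ractN m 0)); rewrite -ractDb ?addr0 //; exact: inB0.
move=> Aexi s_uniq s_supp; have [supp_uniq supp0 _] := supp_coord Aexi.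
by apply: eq_big_support => // i; [move/supp0 | move/s_supp] => ->.
Qed.

Lemma coord_lift_hom : right_B_hom_Ae mul e ractN coord_lift.
Proof.
have [_ [ractM [ractDb [ractDn [_ ractZb]]]]] := HN.
split=> [x y Aex Aey|].
  have [_ x0 _] := supp_coord Aex; have [_ y0 _] := supp_coord Aey.
  set s := undup (supp x ++ supp y).
  have s_supp i : i \notin s -> i \notin supp x /\ i \notin supp y.
    by rewrite mem_undup mem_cat negb_or => /andP.
  have chD i := (ch_rmap i).2.1.
  rewrite (coord_liftE Aex (undup_uniq _) (fun i si => x0 i (s_supp i si).1)).
  rewrite (coord_liftE Aey (undup_uniq _) (fun i si => y0 i (s_supp i si).2)).
  rewrite (coord_liftE (inAeD Aex Aey) (undup_uniq (supp x ++ supp y))); last first.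
    by move=> i /s_supp [/x0 xi0 /y0 yi0]; rewrite chD // xi0 yi0 addr0.
  by rewrite -big_split; apply: eq_bigr => i _; rewrite chD // ractDb //; apply: (ch_rmap i).1.
split=> [c x Aex|x b Aex Bb].
  have [supp_uniq x0 _] := supp_coord Aex.
  rewrite (coord_liftE (inAeZ c Aex) supp_uniq); last first.
    by move=> i /x0 xi0; rewrite (ch_rmap i).2.2.1 // xi0 scaler0.
  rewrite scaler_sumr; apply: eq_bigr => i _.
  by rewrite (ch_rmap i).2.2.1 // ractZb //; apply: (ch_rmap i).1.
have [supp_uniq x0 _] := supp_coord Aex.
rewrite (coord_liftE (inAe_mulB Aex Bb) supp_uniq); last first.
  by move=> i /x0 xi0; rewrite (ch_rmap i).2.2.2 // xi0 mul0l.
rewrite /coord_lift (additive_sum_in (f := ractN^~ b) (P := fun=> True)) //; last first.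
  by move=> m m' _ _; exact: ractDn.
by apply: eq_bigr => i _; rewrite (ch_rmap i).2.2.2 // ractM //; apply: (ch_rmap i).1.
Qed.

Lemma coord_lift_lifts xi : inAe mul e xi -> g (coord_lift xi) = h xi.
Proof.
have [gD [_ gR]] := Hg; have [hD [_ hR]] := Hh.
move=> Aexi; have [_ _ xiE] := supp_coord Aexi.
have Be := inB_idem.
rewrite /coord_lift (additive_sum_in (f := g) (P := fun=> True)) //.
rewrite [in RHS]xiE (additive_sum_in (P := inAe mul e) inAe0 inAeD hD) => [|i].
  apply: eq_bigr => i _; have Bi := (ch_rmap i).1 _ Aexi.
  rewrite gR // n_lift -hR //; last exact: (al_rmap i).1.
  by rewrite -(al_rmap i).2.2.2 // inB_mul_idem.
by apply: (al_rmap i).1; apply: (ch_rmap i).1.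
Qed.

End Projectivity.

Lemma left_coordinate_system_projective e :
  Defs.idempotent mul e -> left_coordinate_system mul e -> projective_Ae mul e.
Proof.
move=> ee [I [al [ch [al_rmap [ch_rmap [coord _]]]]]].
move=> NT PT ractN ractP HN _ g Hg g_surj h Hh.
have /choice [n n_lift] i : exists m, g m = h (al i e) by apply: g_surj.
have /choice [supp supp_coord] xi : exists s, inAe mul e xi ->
    [/\ uniq s, forall i, i \notin s -> ch i xi = 0 & xi = \sum_(i <- s) al i (ch i xi)].
  have [/coord [s [s_uniq [s0 xiE]]]|] := EM (inAe mul e xi); last by exists [::].
  by exists s.
exists (coord_lift ch ractN n supp); split.
  exact: (coord_lift_hom ch_rmap HN n supp_coord).
exact: (coord_lift_lifts ee al_rmap ch_rmap Hg Hh n_lift supp_coord).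
Qed.

End Algebra.

Theorem theorem6p5 (R : realType) (A : lmodType R[i]) (mul : A -> A -> A) :
  is_algebra mul -> strongly_AUF mul ->
  forall e : A, generating mul e ->
    left_coordinate_system mul e /\ projective_Ae mul e.
Proof.
move=> Halg [[J [E [Eidem [Eorth [_ Edec]]]]] _] e egen.
have lcs := generating_left_coordinate_system Halg Eidem Eorth Edec egen.
by split=> //; apply: left_coordinate_system_projective egen.1 lcs.
Qed.
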